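(* Let $M$ be an adequate monoid, $\chi:\Sigma\to M$ a function and $\tau$ the map defined below. Suppose $\mu:X\to Y$ is a morphism of idempotent $\Sigma$-trees. Then $\tau(Y)\tau(X)=\tau(Y)$ in $M$.
   Context: Adequate monoid: a monoid $M$ whose idempotents commute and in which every $\mathcal{L}^*$-class and every $\mathcal{R}^*$-class contains an idempotent, where $a\,\mathcal{L}^*\,b$ iff ($ax=ay\Leftrightarrow bx=by$ for all $x,y\in M$) and $a\,\mathcal{R}^*\,b$ iff ($xa=ya\Leftrightarrow xb=yb$ for all $x,y\in M$); $x^+$ and $x^*$ denote the unique idempotents $\mathcal{R}^*$- and $\mathcal{L}^*$-related to $x$. Trees: a $\Sigma$-tree is a finite directed graph whose underlying undirected graph is a tree, each edge $e$ having initial vertex $\alpha(e)$, terminal vertex $\omega(e)$ and label $\lambda(e)\in\Sigma$, with distinguished start and end vertices such that there is a (possibly empty) directed path from start to end vertex; it is idempotent if start vertex equals end vertex. A morphism $X\to Y$ maps vertices to vertices and edges to edges, preserving $\alpha$, $\omega$ and $\lambda$, and maps start/end vertex of $X$ to start/end vertex of $Y$. The map $\tau$ from idempotent trees to idempotents of $M$ is defined recursively on the number of edges: if $X$ has no edges, $\tau(X)=1$. Otherwise let $v$ be its start (= end) vertex; for an edge $e$ with $\alpha(e)=v$ let $X_e$ be the connected component of $X$ with edge $e$ removed containing $\omega(e)$, viewed as an idempotent tree with start and end vertex $\omega(e)$; for an edge $e$ with $\omega(e)=v$ let $X_e$ be the component of $X$ with $e$ removed containing $\alpha(e)$, viewed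 as an idempotent tree at $\alpha(e)$. Then $\tau(X)=\prod_{e:\alpha(e)=v}[\chi(\lambda(e))\tau(X_e)]^+\cdot\prod_{e:\omega(e)=v}[\tau(X_e)\chi(\lambda(e))]^*$ (a product of commuting idempotents, independent of order). *)

From mathcomp Require Import all_boot.
Set Implicit Arguments. Unset Strict Implicit. Unset Printing Implicit Defensive.

Section Monoid.
Variables (M : Type) (mul : M -> M -> M) (one : M).

Definition is_monoid : Prop :=
  (forall a b c, mul a (mul b c) = mul (mul a b) c) /\
  (forall a, mul one a = a) /\ (forall a, mul a one = a).

Definition idem (e : M) : Prop := mul e e = e.

Definition Lstar (a b : M) : Prop :=
  forall x y, mul a x = mul a y <-> mul b x = mul b y.
Definition Rstar (a b : M) : Prop :=
  forall x y, mul x a = mul y a <-> mul x b = mul y b.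

Definition is_adequate : Prop :=
  is_monoid /\
  (forall e f, idem e -> idem f -> mul e f = mul f e) /\
  (forall a, exists e, idem e /\ Lstar a e) /\
  (forall a, exists e, idem e /\ Rstar a e).
End Monoid.

Section Graph.
Variables (V E : finType) (alpha omega : E -> V).

Definition uadj (D : {set E}) : rel V := fun u w =>
  [exists f in D, ((alpha f == u) && (omega f == w)) ||
                  ((omega f == u) && (alpha f == w))].

Definition dadj : rel V := fun u w =>
  [exists f, (alpha f == u) && (omega f == w)].

Definition is_tree : Prop :=
  (forall u w, connect (uadj setT) u w) /\
  (forall e, ~~ connect (uadj (setT :\ e)) (alpha e) (omega e)).

Definition comp (D : {set E}) (e : E) (w : V) : {set E} :=
  [set f in D :\ e | connect (uadj (D :\ e)) w (alpha f)].
End Graph.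

Record sigma_tree (Sigma : Type) := SigmaTree {
  tV : finType;
  tE : finType;
  talpha : tE -> tV;
  tomega : tE -> tV;
  tlab : tE -> Sigma;
  tstart : tV;
  tend : tV;
  tree_ax : is_tree talpha tomega;
  path_ax : connect (dadj talpha tomega) tstart tend }.

Definition idempotent_tree (Sigma : Type) (X : sigma_tree Sigma) : Prop :=
  tstart X = tend X.

Definition tree_morphism (Sigma : Type) (X Y : sigma_tree Sigma)
    (fV : tV X -> tV Y) (fE : tE X -> tE Y) : Prop :=
  (forall e, talpha (fE e) = fV (talpha e)) /\
  (forall e, tomega (fE e) = fV (tomega e)) /\
  (forall e, tlab (fE e) = tlab e) /\
  fV (tstart X) = tstart Y /\ fV (tend X) = tend Y.

Section Tau.
Variables (M : Type) (mul : M -> M -> M) (one : M) (plus star : M -> M).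
Variables (Sigma : Type) (chi : Sigma -> M).
Variables (V E : finType) (alpha omega : E -> V) (lab : E -> Sigma).

(** tau of the idempotent tree with edge set D rooted at v (the component of
    v); recursion on the number of edges, via fuel n > #|D| *)
Fixpoint tau_aux (n : nat) (D : {set E}) (v : V) : M :=
  match n with
  | 0 => one
  | n'.+1 =>
    mul (\big[mul/one]_(e in D | alpha e == v)
           plus (mul (chi (lab e))
                     (tau_aux n' (comp alpha omega D e (omega e)) (omega e))))
        (\big[mul/one]_(e in D | omega e == v)
           star (mul (tau_aux n' (comp alpha omega D e (alpha e)) (alpha e))
                     (chi (lab e))))
  end.
End Tau.

Definition tau (M : Type) (mul : M -> M -> M) (one : M) (plus star : M -> M)
    (Sigma : Type) (chi : Sigma -> M) (X : sigma_tree Sigma) : M :=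
  tau_aux mul one plus star chi (@talpha _ X) (@tomega _ X) (@tlab _ X)
          #|tE X|.+1 setT (tstart X).

From Pilot Require Import Defs.
From mathcomp Require Import all_boot.
Set Implicit Arguments. Unset Strict Implicit. Unset Printing Implicit Defensive.

(* The idempotents of an adequate monoid commute, so they form a meet
   semilattice for e ⊑ f := ef = e, and tau(D, v) is the meet of one factor
   per edge of D at v.  Cutting a tree at an edge f : u -> w into halves with
   values A (at w) and B (at u) gives tau_u = B (c A)^+ and tau_w = A (B c)^*
   where c = chi(f); a short computation then yields the re-rooting
   inequalities tau_u ⊑ (c tau_w)^+ and tau_w ⊑ (tau_u c)^*.  For a morphism
   mu : X -> Y, an induction on the subtrees of X then shows
   tau_Y(mu v) ⊑ tau_X(D, v): each factor of the right-hand side is bounded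
   below by one of these re-rooting inequalities along mu(e). *)

Lemma connect_from (T : finType) (e e' : rel T) (x : T) :
  (forall y z, connect e x y -> e y z -> e' y z) ->
  forall y, connect e x y -> connect e' x y.
Proof.
move=> ee' y /connectP [p]; elim/last_ind: p y => [|p z IHp] y /=; first by move=> _ ->.
rewrite rcons_path last_rcons => /andP [ep ez] ->.
have cxl : connect e x (last x p) by apply/connectP; exists p.
exact: connect_trans (IHp _ ep erefl) (connect1 (ee' _ _ cxl ez)).
Qed.

Section TreeGraph.
Variables (V E : finType) (alpha omega : E -> V).
Local Notation ua := (uadj alpha omega).
Local Notation comp := (Defs.comp alpha omega).

Definition joins (g : E) (x y : V) :=
  (alpha g == x) && (omega g == y) || (omega g == x) && (alpha g == y).

Lemma joins_incident (g : E) (x y : V) : joins g x y -> (alpha g == x) || (omega g == x).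
Proof. by case/orP => /andP [-> _]; rewrite ?orbT. Qed.

Lemma uadj_sym (D : {set E}) : symmetric (ua D).
Proof.
move=> x y; apply/existsP/existsP => -[g /andP [gD jg]]; exists g;
  by rewrite gD; case/orP: jg => /andP [-> ->]; rewrite ?orbT.
Qed.

Lemma uadj_sub (D D' : {set E}) : D' \subset D -> subrel (connect (ua D')) (connect (ua D)).
Proof.
move=> sD'D; apply: connect_sub => x y /existsP [g /andP [gD' jg]].
by apply: connect1; apply/existsP; exists g; rewrite (subsetP sD'D).
Qed.

Lemma comp_card (D : {set E}) (e : E) (w : V) : e \in D -> #|comp D e w| < #|D|.
Proof.
move=> eD; rewrite (cardsD1 e D) eD ltnS subset_leq_card //.
by apply/subsetP => f; rewrite inE => /andP [].
Qed.

Lemma comp_mono (D D' : {set E}) (e : E) (w : V) :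
  D' \subset D -> comp D' e w \subset comp D e w.
Proof.
move=> sD'D; apply/subsetP => f; rewrite !inE => /andP [/andP [-> fD'] cwf].
rewrite (subsetP sD'D) //; apply: uadj_sub cwf.
by apply/subsetP => g; rewrite !inE => /andP [-> /(subsetP sD'D)].
Qed.

Hypothesis tree : is_tree alpha omega.

Lemma tree_no_loop (g : E) : alpha g != omega g.
Proof. by apply/eqP => agog; have := tree.2 g; rewrite agog connect0. Qed.

Lemma tree_bridge (g : E) (x y : V) : joins g x y -> ~~ connect (ua (setT :\ g)) x y.
Proof.
move=> jg; have := tree.2 g.
by case/orP: jg => /andP [/eqP -> /eqP ->]; rewrite // (sym_connect_sym (uadj_sym _)).
Qed.

(* Removing an edge g at w and keeping the side of its other end x gives the
   same edges whether or not another edge f at w was removed first: no edge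
   reachable from x in the tree minus g can be f, for otherwise w would be
   reachable from x and g would not be a bridge. *)
Lemma comp_incident (f g : E) (w x : V) :
  g != f -> joins g w x -> (alpha f == w) || (omega f == w) ->
  comp (comp setT f w) g x = comp setT g x.
Proof.
move=> gf jg fw; apply/eqP; rewrite eqEsubset comp_mono ?subsetT //=.
set R := ua (setT :\ g).
have Rstep h y z : h != g -> joins h y z -> R y z.
  by move=> hg jh; apply/existsP; exists h; rewrite !inE hg.
have x_side_ne_f h z : connect R x z -> (alpha h == z) || (omega h == z) -> h != f.
  move=> cxz hz; apply/eqP => hf; subst h.
  have fg : f != g by rewrite eq_sym.
  have [cxa cxo] : connect R x (alpha f) /\ connect R x (omega f).
    case/orP: hz => /eqP ez; rewrite -ez in cxz; split=> //;
      apply: connect_trans cxz (connect1 (Rstep f _ _ fg _)); by rewrite /joins !eqxx ?orbT.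
  have := tree_bridge jg; rewrite (sym_connect_sym (uadj_sym _)).
  by case/orP: fw => /eqP <-; rewrite ?cxa ?cxo.
have x_side_in_comp h z : h != g -> connect R x z -> (alpha h == z) || (omega h == z) ->
    h \in comp setT f w.
  move=> hg cxz hz; have hf := x_side_ne_f h z cxz hz.
  have cxa : connect R x (alpha h).
    case/orP: hz => /eqP ez; first by rewrite ez.
    by apply: connect_trans cxz (connect1 (Rstep h _ _ hg _)); rewrite /joins ez !eqxx orbT.
  rewrite !inE hf /=; apply: connect_trans (connect1 _) (connect_from _ cxa).
    by apply/existsP; exists g; rewrite !inE gf.
  move=> y z' cxy /existsP [h' /andP [h'g jh']]; apply/existsP; exists h'.
  by rewrite !inE jh' (x_side_ne_f h' y cxy) ?(joins_incident jh').
apply/subsetP => h; rewrite inE in_setD1 => /andP [/andP [hg _] cxh].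
rewrite inE in_setD1 hg (x_side_in_comp h (alpha h)) ?eqxx //=; apply: connect_from cxh.
move=> y z cxy /existsP [h' /andP [h'D jh']]; apply/existsP; exists h'.
have h'g : h' != g by move: h'D; rewrite in_setD1 => /andP [].
by rewrite in_setD1 h'g (x_side_in_comp h' y) ?jh' ?(joins_incident jh').
Qed.

End TreeGraph.

Section AdequateMonoid.
Variables (M : Type) (mul : M -> M -> M) (one : M) (plus star : M -> M).
Local Notation "x ** y" := (mul x y) (at level 40, left associativity).
Local Notation "x ⊑ y" := (x ** y = x) (at level 70, no associativity).
Local Notation idem := (idem mul).
Hypothesis mulA : forall a b c, a ** (b ** c) = a ** b ** c.
Hypothesis mul1m : forall a, one ** a = a.
Hypothesis mulm1 : forall a, a ** one = a.
Hypothesis idemC : forall e f, idem e -> idem f -> e ** f = f ** e.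
Hypothesis plus_idem : forall x, idem (plus x).
Hypothesis plus_Rstar : forall x, Rstar mul x (plus x).
Hypothesis star_idem : forall x, idem (star x).
Hypothesis star_Lstar : forall x, Lstar mul x (star x).

Lemma idemM e f : idem e -> idem f -> idem (e ** f).
Proof.
rewrite /Defs.idem => ee ff.
by rewrite mulA -(mulA e f e) (idemC ff ee) mulA ee -mulA ff.
Qed.

Lemma mul_plus x : plus x ** x = x.
Proof. by have := (plus_Rstar x (plus x) one).2; rewrite !mul1m; apply; apply: plus_idem. Qed.

Lemma mul_star x : x ** star x = x.
Proof. by have := (star_Lstar x (star x) one).2; rewrite !mulm1; apply; apply: star_idem. Qed.

Lemma plus_lid h y : h ** y = y -> h ** plus y = plus y.
Proof. by have := (plus_Rstar y h one).1; rewrite !mul1m. Qed.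

Lemma star_rid k y : y ** k = y -> star y ** k = star y.
Proof. by have := (star_Lstar y k one).1; rewrite !mulm1. Qed.

Lemma plus_unique y g : idem g ->
  (forall s t, s ** y = t ** y <-> s ** g = t ** g) -> plus y = g.
Proof.
move=> gg yRg.
have plus_g : plus y ** g = g.
  by have := (yRg (plus y) one).1; rewrite !mul1m; apply; apply: mul_plus.
have g_plus : g ** plus y = plus y.
  by apply: plus_lid; have := (yRg g one).2; rewrite !mul1m; apply; apply: gg.
by rewrite -g_plus idemC.
Qed.

Lemma star_unique y g : idem g ->
  (forall s t, y ** s = y ** t <-> g ** s = g ** t) -> star y = g.
Proof.
move=> gg yLg.
have g_star : g ** star y = g.
  by have := (yLg (star y) one).1; rewrite !mulm1; apply; apply: mul_star.
have star_g : star y ** g = star y.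
  by apply: star_rid; have := (yLg g one).2; rewrite !mulm1; apply; apply: gg.
by rewrite -star_g idemC.
Qed.

Lemma plus_mul_idem e x : idem e -> plus (e ** x) = e ** plus x.
Proof.
move=> ee; apply: plus_unique; first exact: idemM.
by move=> s t; rewrite !mulA; apply: plus_Rstar.
Qed.

Lemma star_mul_idem x e : idem e -> star (x ** e) = star x ** e.
Proof.
move=> ee; apply: star_unique; first exact: idemM.
by move=> s t; rewrite -!mulA; apply: star_Lstar.
Qed.

Lemma le_trans x y z : x ⊑ y -> y ⊑ z -> x ⊑ z.
Proof. by move=> xy yz; rewrite -xy -mulA yz. Qed.

Lemma le_mul x a b : x ⊑ a -> x ⊑ b -> x ⊑ a ** b.
Proof. by move=> xa xb; rewrite mulA xa xb. Qed.

Lemma mul_le_l a b : idem a -> idem b -> a ** b ⊑ a.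
Proof. by move=> aa bb; rewrite -mulA (idemC bb aa) mulA aa. Qed.

Lemma mul_le_r a b : idem b -> a ** b ⊑ b.
Proof. by move=> bb; rewrite -mulA bb. Qed.

Lemma le_antisym x y : idem x -> idem y -> x ⊑ y -> y ⊑ x -> x = y.
Proof. by move=> xx yy xy yx; rewrite -xy idemC. Qed.

Lemma plus_mono c A B : idem A -> idem B -> A ⊑ B -> plus (c ** A) ⊑ plus (c ** B).
Proof.
move=> AA BB AB; rewrite idemC //; apply: plus_lid.
by rewrite -AB (idemC AA BB) (mulA c) mulA mul_plus.
Qed.

Lemma star_mono c A B : A ⊑ B -> star (A ** c) ⊑ star (B ** c).
Proof. by move=> AB; apply: star_rid; rewrite -{1}AB -(mulA A B c) -mulA mul_star mulA AB. Qed.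

(* For U := B (c A)^+ and W := A (B c)^*: U c W = B c A, since
   (c A)^+ c A = c A and B c (B c)^* = B c; and (B c A)^+ = U, (B c A)^* = W. *)
Lemma reroot_idem A B c : idem A -> idem B ->
  B ** plus (c ** A) ⊑ plus (c ** (A ** star (B ** c))) /\
  A ** star (B ** c) ⊑ star (B ** plus (c ** A) ** c).
Proof.
move=> AA BB; set U := B ** plus (c ** A); set W := A ** star (B ** c).
have UU : idem U by apply: idemM.
have WW : idem W by apply: idemM.
have UcW : U ** c ** W = B ** c ** A.
  rewrite /U /W mulA -(mulA _ c A) -(mulA B) mul_plus (mulA B c A).
  by rewrite -(mulA _ A) (idemC AA (star_idem _)) mulA mul_star.
split; first by rewrite -plus_mul_idem // mulA UcW -mulA plus_mul_idem.
by rewrite idemC // -star_mul_idem // UcW star_mul_idem // (idemC (star_idem _) AA).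
Qed.

Lemma big_idem I (r : seq I) (P : pred I) (F : I -> M) :
  (forall i, P i -> idem (F i)) -> idem (\big[mul/one]_(i <- r | P i) F i).
Proof. exact: (big_ind idem (mul1m one) idemM). Qed.

Lemma le_big x I (r : seq I) (P : pred I) (F : I -> M) :
  (forall i, P i -> x ⊑ F i) -> x ⊑ \big[mul/one]_(i <- r | P i) F i.
Proof.
move=> xF; apply: (big_rec (fun y => x ⊑ y)) => [|i y Pi xy]; first exact: mulm1.
by rewrite mulA xF.
Qed.

Lemma big_le (I : eqType) (r : seq I) (P : pred I) (F : I -> M) j :
  (forall i, P i -> idem (F i)) -> j \in r -> P j ->
  \big[mul/one]_(i <- r | P i) F i ⊑ F j.
Proof.
move=> FF; elim: r => // i r IHr; rewrite in_cons big_cons => /orP [/eqP -> | jr] Pj.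
  by rewrite Pj; apply: mul_le_l; [apply: FF | apply: big_idem].
by case: ifP => Pi; [rewrite -mulA IHr | apply: IHr].
Qed.

Variables (Sigma : Type) (chi : Sigma -> M).

Section Tau.
Variables (V E : finType) (alpha omega : E -> V) (lab : E -> Sigma).
Local Notation T := (tau_aux mul one plus star chi alpha omega lab).
Local Notation comp := (Defs.comp alpha omega).

Lemma tau_aux_idem n (D : {set E}) (v : V) : idem (T n D v).
Proof.
elim: n D v => [|n IHn] D v /=; first exact: mul1m.
by apply: idemM; apply: big_idem => e _; [apply: plus_idem | apply: star_idem].
Qed.

Lemma tau_aux_fuel n m (D : {set E}) (v : V) : #|D| < n -> #|D| < m -> T n D v = T m D v.
Proof.
elim: n m D v => [|n IHn] [|m] D v //= Dn Dm.
by congr (_ ** _); apply: eq_bigr => e /andP [eD _]; rewrite (IHn m) //;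
  apply: leq_trans (comp_card _ _ _ eD) _.
Qed.

Definition tau_set (D : {set E}) (v : V) := T #|D|.+1 D v.

Definition out_factor (D : {set E}) (e : E) :=
  plus (chi (lab e) ** tau_set (comp D e (omega e)) (omega e)).
Definition in_factor (D : {set E}) (e : E) :=
  star (tau_set (comp D e (alpha e)) (alpha e) ** chi (lab e)).
Definition edge_factor (D : {set E}) (v : V) (e : E) :=
  if alpha e == v then out_factor D e else in_factor D e.

Lemma tau_setE (D : {set E}) (v : V) : tau_set D v =
  \big[mul/one]_(e in D | alpha e == v) out_factor D e **
  \big[mul/one]_(e in D | omega e == v) in_factor D e.
Proof.
rewrite /tau_set /=; congr (_ ** _); apply: eq_bigr => e /andP [eD _].
  by rewrite /out_factor /tau_set (tau_aux_fuel _ (comp_card _ _ _ eD) (ltnSn _)).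
by rewrite /in_factor /tau_set (tau_aux_fuel _ (comp_card _ _ _ eD) (ltnSn _)).
Qed.

Lemma tau_set_idem (D : {set E}) (v : V) : idem (tau_set D v).
Proof. exact: tau_aux_idem. Qed.

Lemma tau_set_le_factor (D : {set E}) (v : V) (e : E) :
  e \in D -> (alpha e == v) || (omega e == v) -> tau_set D v ⊑ edge_factor D v e.
Proof.
move=> eD ev; rewrite tau_setE /edge_factor.
set P := \big[mul/one]_(_ in D | _) _; set Q := \big[mul/one]_(_ in D | _) _.
have PP : idem P by apply: big_idem => i _; apply: plus_idem.
have QQ : idem Q by apply: big_idem => i _; apply: star_idem.
case av: (alpha e == v).
  have Pe : (e \in D) && (alpha e == v) by rewrite eD av.
  exact: le_trans (mul_le_l PP QQ) (big_le (fun i _ => plus_idem _) (mem_index_enum e) Pe).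
have Pe : (e \in D) && (omega e == v) by rewrite eD; rewrite av in ev.
exact: le_trans (mul_le_r _ QQ) (big_le (fun i _ => star_idem _) (mem_index_enum e) Pe).
Qed.

Section Tree.
Hypothesis tree : is_tree alpha omega.

Lemma le_tau_set x (D : {set E}) (v : V) :
  (forall e, e \in D -> (alpha e == v) || (omega e == v) -> x ⊑ edge_factor D v e) ->
  x ⊑ tau_set D v.
Proof.
move=> xF; rewrite tau_setE; apply: le_mul; apply: le_big => e /andP [eD ev].
  by have := xF e eD; rewrite /edge_factor ev; apply.
have := xF e eD; rewrite /edge_factor ev orbT -(eqP ev).
by rewrite (negbTE (tree_no_loop tree e)); apply.
Qed.

Lemma tau_set_split (f : E) (v : V) : (alpha f == v) || (omega f == v) ->
  tau_set setT v = tau_set (comp setT f v) v ** edge_factor setT v f.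
Proof.
move=> fv; set C := comp setT f v.
have shared e : e != f -> (alpha e == v) || (omega e == v) ->
    e \in C /\ edge_factor C v e = edge_factor setT v e.
  move=> ef ev; split.
    rewrite inE in_setD1 ef in_setT /=; case/orP: ev => /eqP ev; first by rewrite ev connect0.
    by apply: connect1; apply/existsP; exists e; rewrite in_setD1 ef in_setT ev !eqxx /= orbT.
  rewrite /edge_factor; case av: (alpha e == v).
    have je : joins alpha omega e v (omega e) by rewrite /joins av eqxx.
    by rewrite /out_factor (comp_incident tree ef je fv).
  have ov : omega e == v by rewrite av in ev.
  have je : joins alpha omega e v (alpha e) by rewrite /joins ov eqxx orbT.
  by rewrite /in_factor (comp_incident tree ef je fv).
have fC : f \notin C by rewrite inE in_setD1 eqxx.
have FF : idem (edge_factor setT v f).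
  by rewrite /edge_factor; case: (alpha f == v); [apply: plus_idem | apply: star_idem].
apply: le_antisym; [exact: tau_set_idem | exact: idemM (tau_set_idem _ _) FF | |].
  apply: le_mul; last exact: tau_set_le_factor.
  apply: le_tau_set => e eC ev; have ef : e != f by apply: contraNneq fC => <-.
  by rewrite (shared e ef ev).2; apply: tau_set_le_factor.
apply: le_tau_set => e _ ev; have [-> | ef] := eqVneq e f; first exact: mul_le_r.
have [eC <-] := shared e ef ev.
exact: le_trans (mul_le_l (tau_set_idem _ _) FF) (tau_set_le_factor eC ev).
Qed.

Lemma tau_set_reroot (f : E) :
  tau_set setT (alpha f) ⊑ plus (chi (lab f) ** tau_set setT (omega f)) /\
  tau_set setT (omega f) ⊑ star (tau_set setT (alpha f) ** chi (lab f)).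
Proof.
have split_alpha := @tau_set_split f (alpha f).
have split_omega := @tau_set_split f (omega f).
rewrite /edge_factor eqxx (negbTE (tree_no_loop tree f)) in split_alpha split_omega.
rewrite split_alpha ?eqxx // split_omega ?eqxx ?orbT //.
exact: reroot_idem (tau_set_idem _ _) (tau_set_idem _ _).
Qed.

End Tree.
End Tau.

Lemma tau_morphism_le (X Y : sigma_tree Sigma) (fV : tV X -> tV Y) (fE : tE X -> tE Y) :
  is_tree (@talpha _ Y) (@tomega _ Y) -> tree_morphism fV fE -> forall n D v,
  tau_set (@talpha _ Y) (@tomega _ Y) (@tlab _ Y) setT (fV v)
  ⊑ tau_aux mul one plus star chi (@talpha _ X) (@tomega _ X) (@tlab _ X) n D v.
Proof.
move=> treeY [fV_alpha [fV_omega [fE_lab _]]].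
elim=> [|n IHn] D v /=; first exact: mulm1.
apply: le_mul; apply: le_big => e /andP [_ /eqP <-].
  have [reroot _] := tau_set_reroot (@tlab _ Y) treeY (fE e).
  rewrite fV_alpha fV_omega fE_lab in reroot; apply: le_trans reroot _.
  by apply: plus_mono; [apply: tau_set_idem | apply: tau_aux_idem | apply: IHn].
have [_ reroot] := tau_set_reroot (@tlab _ Y) treeY (fE e).
rewrite fV_alpha fV_omega fE_lab in reroot; apply: le_trans reroot _.
exact: star_mono.
Qed.

End AdequateMonoid.

Theorem lemma5p8 (M : Type) (mul : M -> M -> M) (one : M)
  (plus star : M -> M) (Sigma : Type) (chi : Sigma -> M)
  (X Y : sigma_tree Sigma) (fV : tV X -> tV Y) (fE : tE X -> tE Y) :
  is_adequate mul one ->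
  (forall x, idem mul (plus x) /\ Rstar mul x (plus x)) ->
  (forall x, idem mul (star x) /\ Lstar mul x (star x)) ->
  idempotent_tree X -> idempotent_tree Y ->
  tree_morphism fV fE ->
  mul (tau mul one plus star chi Y) (tau mul one plus star chi X)
  = tau mul one plus star chi Y.
Proof.
move=> [[mulA [mul1m mulm1]] [idemC _]] plusP starP _ _ morph.
have [_ [_ [_ [fV_start _]]]] := morph.
rewrite /tau -fV_start -[#|tE Y|]cardsT.
exact: (tau_morphism_le mulA mul1m mulm1 idemC (fun x => (plusP x).1) (fun x => (plusP x).2)
  (fun x => (starP x).1) (fun x => (starP x).2) chi (tree_ax Y) morph).
Qed.
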